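(* Let $Q$ be the quiver with one vertex and $2e$ loops, $e\ge1$, and let $d\geq 1$, $v\in\mathbb{Z}$. Then $S^d_v$ consists of the partitions $d=d_1+\dots+d_k$ such that for all $1\le i\le k$ $$\tfrac12 d_i\Big(\sum_{j<i}d_j-\sum_{j>i}d_j\Big)+\frac{vd_i}{d}\in\mathbb{Z}.$$ Moreover, $S^d_v=\{d\}$ if and only if either $\gcd(d,v)=1$ and $d\not\equiv2\pmod 4$, or $\gcd(d,v)=2$ and $d\equiv2\pmod4$.
   Context: Here $R(d)=\mathfrak{gl}(d)^{\oplus 2e}$ with $G(d)=GL(d)$ acting by conjugation, $\mathfrak{g}(d)=\mathfrak{gl}(d)$, diagonal torus with weights $\beta_1,\dots,\beta_d$, $\tau_d=\frac1d\sum_a\beta_a$. For a cocharacter $\lambda$, $n_\lambda=\langle\lambda,\det(R(d)^\vee)^{\lambda>0}\rangle-\langle\lambda,\det(\mathfrak{g}(d)^\vee)^{\lambda>0}\rangle$ ($V^{\lambda>0}$: span of weights pairing positively with $\lambda$). A cocharacter has associated partition $(d_j)_j$ if its $j$-th distinct weight on $\beta_1,\dots,\beta_d$ occurs $d_j$ times. $S^d_v$ is the set of partitions of $d$ such that $n_\lambda/2+\langle\lambda,v\tau_d\rangle\in\mathbb{Z}$ for every cocharacter $\lambda$ with that associated partition; $\{d\}$ denotes the one-term partition. *)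

From mathcomp Require Import all_boot all_order all_algebra.
Unset Printing Implicit Defensive.
Import Order.TTheory GRing.Theory Num.Theory.
Local Open Scope ring_scope.

(* Quiver with one vertex and 2e loops, dimension d.
   A cocharacter of the diagonal torus of GL(d) is lam : 'I_d -> int;
   it pairs with the weight beta_a - beta_b as lam a - lam b. *)

(* < lam, det(R(d)^vee)^{lam>0} > : R(d) = gl(d)^{2e} has weights beta_a - beta_b,
   one copy for each (k, a, b) with k < 2e; R(d)^vee has weights beta_b - beta_a. *)
Definition pair_detR (e d : nat) (lam : 'I_d -> int) : int :=
  \sum_(k < (2 * e)%N) \sum_(a < d) \sum_(b < d)
     (if 0 < lam b - lam a then lam b - lam a else 0).

(* < lam, det(g(d)^vee)^{lam>0} >, g(d) = gl(d). *)
Definition pair_detg (d : nat) (lam : 'I_d -> int) : int :=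
  \sum_(a < d) \sum_(b < d) (if 0 < lam b - lam a then lam b - lam a else 0).

Definition n_lam (e d : nat) (lam : 'I_d -> int) : int :=
  pair_detR e d lam - pair_detg d lam.

(* < lam, v tau_d >, tau_d = (1/d) sum_a beta_a *)
Definition pair_vtau (d : nat) (v : int) (lam : 'I_d -> int) : rat :=
  (v%:~R / d%:R) * (\sum_(a < d) lam a)%:~R.

Definition assoc_part (d : nat) (lam : 'I_d -> int) : seq nat :=
  let l := [seq lam i | i <- enum 'I_d] in
  [seq count_mem x l | x <- sort (fun x y : int => y <= x) (undup l)].

Definition is_part (d : nat) (s : seq nat) : Prop :=
  all (fun x => 0 < x)%N s /\ sumn s = d.

Definition in_S (e d : nat) (v : int) (s : seq nat) : Prop :=
  is_part d s /\
  forall lam : 'I_d -> int, assoc_part d lam = s ->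
    ((n_lam e d lam)%:~R / 2 + pair_vtau d v lam : rat) \is a Num.int.

From mathcomp Require Import all_boot all_order all_algebra.
From mathcomp Require Import zify ring.
Import Order.TTheory GRing.Theory Num.Theory.
Local Open Scope ring_scope.

(* Write a cocharacter lam through its distinct values u_1 > ... > u_k, taken
   with multiplicities s_1, ..., s_k (the associated partition).  Both pairings
   are linear in u, and n_lam/2 + <lam, v tau_d> = e * <lam, det(g(d)^vee)^{lam>0}>
   + sum_i u_i T_i, where T_i is the expression of the statement.  Hence integral
   T_i give integrality for every lam, and conversely comparing two cocharacters
   whose values differ by 1 on the i-th block only isolates T_i.
   The partition [d] always lies in S^d_v since T_1 = v.  A partition with at
   least two parts has T_1 = v a/d - a b/2, with a its first part and b the sum
   of the others, so it forces 2d | 2va - abd with a, b > 0; for two parts this is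
   also sufficient, as T_1 + T_2 = v.  An elementary gcd and parity analysis shows
   that such a, b exist exactly when the stated condition fails. *)

Definition posdiff (x y : int) : int := if 0 < y - x then y - x else 0.

Lemma sumn_take_ord (s : seq nat) (i : nat) :
  sumn (take i s) = (\sum_(j < size s | (j < i)%N) nth 0 s j)%N.
Proof.
elim: s i => [|x s IH] [|i] /=; rewrite ?big_ord0 // big_mkcond big_ord_recl /=.
  by rewrite big1.
by rewrite IH big_mkcond.
Qed.

Lemma sumn_drop_ord (s : seq nat) (i : nat) :
  sumn (drop i s) = (\sum_(j < size s | (i <= j)%N) nth 0 s j)%N.
Proof.
apply: (@addnI (sumn (take i s))).
rewrite -sumn_cat cat_take_drop sumnE (big_nth 0) big_mkord.
rewrite (bigID (fun j : 'I__ => (j < i)%N)) sumn_take_ord /=.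
by congr (_ + _); apply: eq_bigl => j; rewrite -leqNgt.
Qed.

Lemma sum_posdiff_sorted (u : seq int) (s : seq nat) :
  sorted (fun x y => y < x) u -> size u = size s ->
  \sum_(i < size s) (\sum_(j < size s) posdiff u`_i u`_j *+ nth 0%N s j) *+ nth 0%N s i
  = \sum_(i < size s) u`_i * (nth 0%N s i)%:R *
      ((sumn (drop i.+1 s))%:R - (sumn (take i s))%:R).
Proof.
move=> u_gt size_u; set k := size s.
pose c (i j : 'I_k) : int := u`_i * (nth 0%N s i)%:R * (nth 0%N s j)%:R.
have posdiffE (i j : 'I_k) : posdiff u`_i u`_j = if (j < i)%N then u`_j - u`_i else 0.
  have u_lt (a b : 'I_k) : (a < b)%N -> u`_b < u`_a.
    have gt_trans : transitive (fun x y : int => y < x).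
      by move=> ? ? ? h1 h2; exact: lt_trans h2 h1.
    by apply: (sorted_ltn_nth gt_trans 0 u_gt); rewrite inE size_u.
  rewrite /posdiff subr_gt0.
  by case: (ltngtP i j) => [/u_lt/lt_gtF -> | /u_lt -> | /val_inj ->]; rewrite ?ltxx.
transitivity (\sum_(i < k) \sum_(j < k | (j < i)%N) (c j i - c i j)).
  apply: eq_bigr => i _; rewrite -mulr_natr mulr_suml [RHS]big_mkcond; apply: eq_bigr => j _.
  by rewrite posdiffE; case: ifP => _; rewrite ?mul0rn ?mul0r // /c -mulr_natr; ring.
under eq_bigr => i _ do rewrite sumrB.
under [RHS]eq_bigr do rewrite sumn_drop_ord sumn_take_ord !natr_sum mulrBr !mulr_sumr.
rewrite !sumrB; congr (_ - _).
by rewrite (exchange_big_dep xpredT).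
Qed.

Section Fibers.
Context {d : nat} (lam : 'I_d -> int).

Definition cochar_values : seq int := [seq lam a | a <- enum 'I_d].

Definition distinct_values : seq int :=
  sort (fun x y : int => y <= x) (undup cochar_values).

Lemma assoc_partE :
  assoc_part d lam = [seq count_mem x cochar_values | x <- distinct_values].
Proof. by []. Qed.

Lemma size_assoc_part : size (assoc_part d lam) = size distinct_values.
Proof. exact: size_map. Qed.

Lemma distinct_values_gt_sorted : sorted (fun x y => y < x) distinct_values.
Proof. by have := @sort_lt_sorted _ int^d (undup cochar_values); rewrite undup_uniq. Qed.

Lemma sum_fibers (V : nmodType) (F : int -> V) :
  \sum_(a < d) F (lam a)
  = \sum_(i < size (assoc_part d lam)) F distinct_values`_i *+ nth 0%N (assoc_part d lam) i.
Proof.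
have -> : \sum_(a < d) F (lam a) = \sum_(x <- cochar_values) F x.
  by rewrite big_map big_enum.
rewrite -big_undup_iterop_count (perm_big distinct_values); last first.
  by rewrite perm_sym perm_sort.
rewrite (big_nth 0) big_mkord size_assoc_part; apply: eq_bigr => i _.
by rewrite assoc_partE (nth_map 0).
Qed.

End Fibers.

Definition shifted_weight (e d : nat) (v : int) (lam : 'I_d -> int) : rat :=
  (n_lam e d lam)%:~R / 2 + pair_vtau d v lam.

Definition block_weight (d : nat) (v : int) (s : seq nat) (i : nat) : rat :=
  (1 / 2 : rat) * (nth 0%N s i)%:R * ((sumn (take i s))%:R - (sumn (drop i.+1 s))%:R)
  + v%:~R * (nth 0%N s i)%:R / d%:R.

Section BlockFormulas.
Context {d : nat} (lam : 'I_d -> int).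
Let u := distinct_values lam.
Let s := assoc_part d lam.

Lemma pair_detRE (e : nat) : pair_detR e d lam = pair_detg d lam *+ (2 * e).
Proof. by rewrite /pair_detR sumr_const card_ord. Qed.

Lemma pair_detg_blocks :
  pair_detg d lam = \sum_(i < size s) u`_i * (nth 0%N s i)%:R *
                      ((sumn (drop i.+1 s))%:R - (sumn (take i s))%:R).
Proof.
rewrite /pair_detg (sum_fibers lam _ (fun x => \sum_(b < d) posdiff x (lam b))).
under eq_bigr do rewrite (sum_fibers lam _ (posdiff _)).
by apply: sum_posdiff_sorted; rewrite ?distinct_values_gt_sorted ?size_assoc_part.
Qed.

Lemma sum_cochar_blocks : \sum_(a < d) lam a = \sum_(i < size s) u`_i * (nth 0%N s i)%:R.
Proof. by rewrite (sum_fibers lam _ id); under [RHS]eq_bigr do rewrite mulr_natr. Qed.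

Lemma shifted_weight_blocks (e : nat) (v : int) :
  shifted_weight e d v lam
  = (e%:Z * pair_detg d lam)%:~R + \sum_(i < size s) (u`_i)%:~R * block_weight d v s i.
Proof.
rewrite /shifted_weight /n_lam pair_detRE /pair_vtau sum_cochar_blocks.
have -> : ((pair_detg d lam *+ (2 * e) - pair_detg d lam)%:~R / 2 : rat)
          = (e%:Z * pair_detg d lam)%:~R - (pair_detg d lam)%:~R / 2.
  rewrite intrB rmorphMn intrM /= -[_ *+ (2 * e)]mulr_natr natrM.
  by rewrite -[e%:~R]/(e%:R : rat); field.
rewrite -addrA; congr (_ + _).
rewrite pair_detg_blocks !rmorph_sum /= mulr_sumr mulr_suml -sumrN -big_split /=.
apply: eq_bigr => i _; rewrite /block_weight !rmorphM !rmorphB /= !rmorph_nat.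
ring.
Qed.

End BlockFormulas.

Fixpoint blocks (s : seq nat) (u : seq int) : seq int :=
  match s, u with
  | n :: s', x :: u' => nseq n x ++ blocks s' u'
  | _, _ => [::]
  end.

Lemma size_blocks (s : seq nat) (u : seq int) : size u = size s -> size (blocks s u) = sumn s.
Proof.
elim: s u => [|n s IH] [|x u] //= [size_u].
by rewrite size_cat size_nseq IH.
Qed.

Lemma blocks_sub (s : seq nat) (u : seq int) : {subset blocks s u <= u}.
Proof.
elim: s u => [|n s IH] [|x u] //= y.
by rewrite mem_cat inE => /orP[/nseqP[-> _] | /IH ->]; rewrite ?eqxx ?orbT.
Qed.

Lemma mem_blocks (s : seq nat) (u : seq int) :
  all (fun n => 0 < n)%N s -> size u = size s -> blocks s u =i u.
Proof.
elim: s u => [|n s IH] [|x u] //= /andP[n_gt0 s_pos] [size_u] y.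
by rewrite mem_cat inE IH // mem_nseq n_gt0.
Qed.

Lemma count_blocks (s : seq nat) (u : seq int) : uniq u -> size u = size s ->
  [seq count_mem x (blocks s u) | x <- u] = s.
Proof.
elim: s u => [|n s IH] [|x u] //= /andP[x_notin_u u_uniq] [size_u].
rewrite count_cat count_nseq /= eqxx mul1n.
rewrite (count_memPn (contra (@blocks_sub s u x) x_notin_u)) addn0; congr (_ :: _).
rewrite -[RHS](IH u) //; apply/eq_in_map => y y_in_u.
rewrite count_cat count_nseq /=.
by case: eqP => [x_eq_y | _]; first by move: x_notin_u; rewrite x_eq_y y_in_u.
Qed.

Section BlockCochar.
Variables (d : nat) (s : seq nat) (u : seq int).
Hypotheses (s_part : is_part d s) (size_u : size u = size s)
           (u_gt : sorted (fun x y => y < x) u).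

Definition block_cochar : 'I_d -> int := fun a => nth 0 (blocks s u) a.

Let u_uniq : uniq u.
Proof. by move: u_gt; rewrite (@lt_sorted_uniq_le _ int^d) => /andP[]. Qed.

Lemma cochar_values_block : cochar_values block_cochar = blocks s u.
Proof.
have size_bl : size (blocks s u) = d by rewrite size_blocks //; case: s_part.
by rewrite /cochar_values -[RHS](mkseq_nth 0) size_bl /mkseq -val_enum_ord -map_comp.
Qed.

Lemma distinct_values_block : distinct_values block_cochar = u.
Proof.
have ge_trans : transitive (fun x y : int => y <= x).
  by move=> ? ? ? h1 h2; exact: le_trans h2 h1.
have u_ge : sorted (fun x y => y <= x) u by apply: sub_sorted u_gt => x y /ltW.
rewrite /distinct_values cochar_values_block.
apply: (sorted_eq ge_trans) => //.
- by move=> x y /andP[xy yx]; apply: le_anti; rewrite xy yx.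
- by apply: sort_sorted => x y; exact: le_total.
rewrite perm_sort; apply: uniq_perm; rewrite ?undup_uniq // => x.
by rewrite mem_undup mem_blocks //; case: s_part.
Qed.

Lemma assoc_part_block : assoc_part d block_cochar = s.
Proof.
by rewrite assoc_partE distinct_values_block cochar_values_block count_blocks.
Qed.

End BlockCochar.

(* The gaps of 2 leave room to raise the i-th value by 1 without merging two blocks. *)
Definition staircase (k i : nat) (bump : bool) : seq int :=
  mkseq (fun j => (if bump && (j == i) then 1 else 0) - (2 * j)%:Z) k.

Lemma staircase_gt_sorted (k i : nat) (bump : bool) :
  sorted (fun x y => y < x) (staircase k i bump).
Proof.
apply: homo_sorted (iota_ltn_sorted 0 k) => j j' j_lt_j'.
case: (bump && (j == i)); case: (bump && (j' == i)); lia.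
Qed.

Lemma staircase_bumpE (k i : nat) (j : 'I_k) :
  (staircase k i true)`_j - (staircase k i false)`_j = if j == i :> nat then 1 else 0.
Proof. by rewrite !nth_mkseq //=; case: eqP => _; ring. Qed.

Lemma in_S_block_weights (e d : nat) (v : int) (s : seq nat) :
  in_S e d v s <->
  is_part d s /\ forall i, (i < size s)%N -> block_weight d v s i \is a Num.int.
Proof.
split => [[s_part s_int] | [s_part w_int]]; split => //.
  move=> i i_lt.
  pose lam bump := block_cochar d s (staircase (size s) i bump).
  have size_st bump : size (staircase (size s) i bump) = size s by rewrite size_mkseq.
  have lam_part bump : assoc_part d (lam bump) = s.
    exact: assoc_part_block (size_st _) (staircase_gt_sorted _ _ _).
  have lam_values bump : distinct_values (lam bump) = staircase (size s) i bump.
    exact: distinct_values_block (size_st _) (staircase_gt_sorted _ _ _).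
  have lam_int bump : shifted_weight e d v (lam bump) \is a Num.int.
    exact: s_int _ (lam_part bump).
  have := rpredB (lam_int true) (lam_int false).
  rewrite !shifted_weight_blocks !lam_part !lam_values opprD addrACA -sumrB.
  under eq_bigr do rewrite -mulrBl -rmorphB staircase_bumpE.
  rewrite (bigD1 (Ordinal i_lt)) //= big1 => [|j]; last first.
    by rewrite -val_eqE => /negbTE ->; rewrite mul0r.
  by rewrite eqxx mul1r addr0 rpredDl // -rmorphB rpred_int.
move=> lam lam_s; rewrite -/(shifted_weight e d v lam) shifted_weight_blocks lam_s.
rewrite rpredD ?rpred_int // rpred_sum // => j _.
by rewrite rpredM ?rpred_int ?w_int.
Qed.

Lemma balanced_split_dvdz (a : nat) (v : int) : (0 < a)%N ->
  (2 * (a + a)%N%:Z %| 2 * v * a%:Z - a%:Z * a%:Z * (a + a)%N%:Z)%Z = (2 %| v - a%:Z)%Z.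
Proof.
move=> a_gt0.
have -> : 2 * (a + a)%N%:Z = (2 * a%:Z) * 2 by lia.
have -> : 2 * v * a%:Z - a%:Z * a%:Z * (a + a)%N%:Z = (2 * a%:Z) * (v - a%:Z * a%:Z).
  by rewrite PoszD; ring.
rewrite dvdz_mul2l; last by lia.
have [t [-> | ->]] : exists t, a = (2 * t)%N \/ a = (2 * t).+1 by exists a./2; lia.
- by apply/idP/idP; lia.
- by apply/idP/idP; lia.
Qed.

Definition singleton_cond (d : nat) (v : int) : bool :=
  [|| (gcdn d `|v| == 1) && (d %% 4 != 2) | (gcdn d `|v| == 2) && (d %% 4 == 2)]%N.

Lemma singleton_condP (d : nat) (v : int) :
  reflect ((gcdn d `|v|%N = 1%N /\ (d %% 4 != 2)%N) \/
           (gcdn d `|v|%N = 2%N /\ (d %% 4 = 2)%N))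
          (singleton_cond d v).
Proof.
apply: (iffP orP) => [[/andP[/eqP-> ->] | /andP[/eqP-> /eqP->]] | [[-> ->] | [-> ->]]];
  by [left | right].
Qed.

Lemma singleton_cond_balanced (d : nat) (v : int) (a : nat) :
  singleton_cond d v -> (d %| 2 * `|v| * a)%N -> (0 < a < d)%N -> (a + a = d)%N.
Proof.
case/orP => /andP[/eqP g_eq /eqP d_mod] d_dvd /andP[a_gt0 a_lt_d].
  have d_coprime_v : coprime d `|v| by rewrite /coprime g_eq.
  have d_dvd_2a : (d %| 2 * a)%N by rewrite -(Gauss_dvdr _ d_coprime_v) mulnCA mulnA.
  by move/dvdnP: d_dvd_2a => [[|[|q]] ?]; nia.
have [m d_eq] : exists m, d = (2 * m)%N by exists d./2; lia.
have m_odd : odd m by move: d_mod; rewrite d_eq; lia.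
have [w v_eq] : exists w, `|v|%N = (2 * w)%N.
  have : (2 %| `|v|)%N by rewrite -g_eq dvdn_gcdr.
  by move/dvdnP => [w ->]; exists w; rewrite mulnC.
have m_coprime_w : coprime m w.
  by rewrite /coprime -(eqn_pmul2l (isT : (0 < 2)%N)) muln_gcdr -d_eq -v_eq g_eq.
have m_dvd_a : (m %| a)%N.
  rewrite -(@Gauss_dvdr _ (2 * w)) ?coprimeMr ?coprimen2 ?m_odd //.
  by rewrite -(@dvdn_pmul2l 2) // -d_eq mulnA -v_eq.
by move/dvdnP: m_dvd_a => [[|[|q]] ?]; nia.
Qed.

Lemma two_block_split_not_singleton (a b : nat) (v : int) : (0 < a)%N -> (0 < b)%N ->
  (2 * (a + b)%N%:Z %| 2 * v * a%:Z - a%:Z * b%:Z * (a + b)%N%:Z)%Z ->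
  ~~ singleton_cond (a + b) v.
Proof.
move=> a_gt0 b_gt0 split_dvd; apply/negP => cond.
have d_dvd : (a + b %| 2 * `|v| * a)%N.
  have : ((a + b)%N%:Z %| 2 * v * a%:Z)%Z.
    rewrite -(subrK (a%:Z * b%:Z * (a + b)%N%:Z) (2 * v * a%:Z)) rpredD ?dvdz_mull //.
    exact: dvdz_trans (dvdz_mull _ (dvdzz _)) split_dvd.
  by rewrite dvdzE !abszM.
have a_eq_b : a = b by have := singleton_cond_balanced _ _ _ cond d_dvd; lia.
subst b; rewrite balanced_split_dvdz // in split_dvd.
case/orP: cond => /andP[/eqP g_eq /eqP d_mod].
  have : (2 %| gcdn (a + a) `|v|)%N.
    by rewrite dvdn_gcd; apply/andP; split; [lia | change (2 %| v)%Z; lia].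
  by rewrite g_eq.
have : (2 %| v)%Z by change (2 %| `|v|)%N; rewrite -g_eq dvdn_gcdr.
lia.
Qed.

Lemma not_singleton_two_block_split (d : nat) (v : int) :
  (0 < d)%N -> ~~ singleton_cond d v ->
  exists a b, [/\ (0 < a)%N, (0 < b)%N, (a + b = d)%N &
    (2 * (a + b)%N%:Z %| 2 * v * a%:Z - a%:Z * b%:Z * (a + b)%N%:Z)%Z].
Proof.
rewrite /singleton_cond; set g := gcdn d `|v| => d_gt0 not_cond.
have g_gt0 : (0 < g)%N by rewrite gcdn_gt0 d_gt0.
have [c d_eq] : exists c, d = (c * g)%N by apply/dvdnP; exact: dvdn_gcdl.
have [w v_eq] : exists w, v = w * g%:Z by apply/dvdzP; rewrite dvdzE dvdn_gcdr.
have balanced m : d = (m + m)%N -> (2 %| v - m%:Z)%Z ->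
    exists a b, [/\ (0 < a)%N, (0 < b)%N, (a + b = d)%N &
      (2 * (a + b)%N%:Z %| 2 * v * a%:Z - a%:Z * b%:Z * (a + b)%N%:Z)%Z].
  by move=> d_eq2 v_m; exists m, m; split; rewrite ?balanced_split_dvdz; lia.
have [g_eq | [g_eq | g_ge3]] : g = 1%N \/ g = 2%N \/ (3 <= g)%N by lia.
- rewrite g_eq /= orbF negbK in not_cond.
  have v_odd : ~~ (2 %| v)%Z.
    apply/negP => /dvdzP[k v_eq2]; have : (2 %| g)%N by rewrite dvdn_gcd; lia.
    by rewrite g_eq.
  apply: (balanced d./2); lia.
- rewrite g_eq /= in not_cond d_eq v_eq.
  apply: (balanced d./2); lia.
(* With d = c g and v = w g, any a = c t makes v a / d integral; t makes a b even. *)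
have [t [h [t_gt0 t_lt_g t_h]]] :
    exists t h, [/\ (0 < t)%N, (t < g)%N & (t * (g - t) = 2 * h)%N].
  by case/boolP: (odd g) => g_odd; [exists 1%N, g./2 | exists 2%N, (g - 2)%N]; split; lia.
exists (c * t)%N, (c * (g - t))%N; split; try nia.
have ab_eq : (c * t * (c * (g - t)) = 2 * (c * c * h))%N by rewrite mulnACA t_h; ring.
apply/dvdzP; exists (w * t%:Z - (c * c * h)%N%:Z).
rewrite -mulnDr subnKC ?(ltnW t_lt_g) // -PoszM ab_eq -d_eq v_eq d_eq !PoszM; ring.
Qed.

Lemma Qint_dvdzE (m n : int) : n != 0 ->
  ((m%:~R / n%:~R : rat) \is a Num.int) = (n %| m)%Z.
Proof.
move=> n_neq0; apply/idP/idP => [/intrP[z mn_z] | /Qint_dvdz //].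
apply/dvdzP; exists z; apply: (@intr_inj rat).
by rewrite intrM -mn_z divfK // intr_eq0.
Qed.

Lemma block_weight_single (d : nat) (v : int) :
  (0 < d)%N -> block_weight d v [:: d] 0 = v%:~R.
Proof.
by move=> d_gt0; rewrite /block_weight /= subrr mulr0 add0r mulfK // pnatr_eq0 -lt0n.
Qed.

Lemma block_weight_head (d : nat) (v : int) (a : nat) (r : seq nat) :
  block_weight d v (a :: r) 0 = block_weight d v [:: a; sumn r] 0.
Proof. by rewrite /block_weight /= drop0 addn0. Qed.

Lemma block_weight_pair_last (a b : nat) (v : int) : (0 < a + b)%N ->
  block_weight (a + b) v [:: a; b] 1 = v%:~R - block_weight (a + b) v [:: a; b] 0.
Proof.
move=> ab_gt0; have : ((a + b)%N%:R : rat) != 0 by rewrite pnatr_eq0 -lt0n.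
by rewrite /block_weight /= !addn0 natrD => ab_neq0; field.
Qed.

Lemma block_weight_pair_int (a b : nat) (v : int) : (0 < a + b)%N ->
  (block_weight (a + b) v [:: a; b] 0 \is a Num.int)
  = (2 * (a + b)%N%:Z %| 2 * v * a%:Z - a%:Z * b%:Z * (a + b)%N%:Z)%Z.
Proof.
move=> ab_gt0; rewrite -Qint_dvdzE; last by lia.
have : ((a + b)%N%:R : rat) != 0 by rewrite pnatr_eq0 -lt0n.
rewrite /block_weight /= !addn0 !(rmorphM, rmorphB) /= !rmorph_nat natrD => ab_neq0.
by congr (_ \is a Num.int); field.
Qed.

Lemma in_S_single (e d : nat) (v : int) : (0 < d)%N -> in_S e d v [:: d].
Proof.
move=> d_gt0; apply/in_S_block_weights; split; first by rewrite /is_part /= d_gt0 addn0.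
by case=> // _; rewrite block_weight_single ?rpred_int.
Qed.

Lemma in_S_pair (e a b : nat) (v : int) : (0 < a)%N -> (0 < b)%N ->
  (2 * (a + b)%N%:Z %| 2 * v * a%:Z - a%:Z * b%:Z * (a + b)%N%:Z)%Z ->
  in_S e (a + b) v [:: a; b].
Proof.
move=> a_gt0 b_gt0 split_dvd; have ab_gt0 : (0 < a + b)%N by rewrite addn_gt0 a_gt0.
apply/in_S_block_weights; split; first by rewrite /is_part /= a_gt0 b_gt0 addn0.
have w0_int : block_weight (a + b) v [:: a; b] 0 \is a Num.int.
  by rewrite block_weight_pair_int.
by case=> [|[|]] // _; rewrite ?block_weight_pair_last ?rpredB ?rpred_int.
Qed.

Lemma in_S_cons2_not_singleton (e d : nat) (v : int) (a b : nat) (r : seq nat) :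
  in_S e d v [:: a, b & r] -> ~~ singleton_cond d v.
Proof.
case/in_S_block_weights => -[/and3P[a_gt0 b_gt0 _] s_sum] w_int; subst d.
have := w_int 0%N isT; rewrite block_weight_head /= block_weight_pair_int; last first.
  by rewrite addn_gt0 a_gt0.
exact: two_block_split_not_singleton a_gt0 (ltn_addr _ b_gt0).
Qed.

Theorem lemma8p6 (e d : nat) (v : int) (he : (1 <= e)%N) (hd : (1 <= d)%N) :
  (forall s : seq nat,
     in_S e d v s <->
     (is_part d s /\
      forall i : nat, (i < size s)%N ->
        ((1 / 2 : rat) * (nth 0%N s i)%:R *
           ((sumn (take i s))%:R - (sumn (drop i.+1 s))%:R)
         + v%:~R * (nth 0%N s i)%:R / d%:R) \is a Num.int))
  /\
  ((forall s : seq nat, in_S e d v s <-> s = [:: d]) <->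
   ((gcdn d `|v|%N = 1%N /\ (d %% 4 != 2)%N) \/
    (gcdn d `|v|%N = 2%N /\ (d %% 4 = 2)%N))).
Proof.
split; first exact: in_S_block_weights.
split => [S_single | /singleton_condP cond s].
  apply/singleton_condP; apply: contraT.
  case/(not_singleton_two_block_split _ _ hd) => a [b [a_gt0 b_gt0 ab_eq split_dvd]].
  subst d; have /S_single : in_S e (a + b) v [:: a; b] by apply: in_S_pair.
  by [].
split=> [s_in | ->]; last exact: in_S_single.
have [[_ s_sum] _] := (in_S_block_weights e d v s).1 s_in.
case: s s_in s_sum => [|a [|b r]] s_in /= s_sum; first by rewrite -s_sum in hd.
  by rewrite -s_sum addn0.
by move/in_S_cons2_not_singleton: s_in; rewrite cond.
Qed.
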